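(* For a commutative ring $R$, the following are equivalent: (1) $R$ is uniquely weakly nil clean; (2) $R/Nil(R)$ is semi Boolean and idempotents can be lifted uniquely weakly modulo $Nil(R)$.
   Context: All rings are associative with identity; $Nil(R)$ is the set (here, ideal) of nilpotent elements and $Idem(R)$ the set of idempotents. $R$ is uniquely weakly nil clean if for every $x\in R$ there exists a unique $e\in Idem(R)$ with $x-e\in Nil(R)$ or $x+e\in Nil(R)$. A ring $A$ is semi Boolean if for every $x\in A$, $x^2=x$ or $x^2=-x$. Idempotents can be lifted uniquely weakly modulo an ideal $I$ if for every $x\in R$ with $x^2-x\in I$ there exists a unique $e\in Idem(R)$ with $x-e\in I$ or $x+e\in I$. *)

From HB Require Import structures.
From mathcomp Require Import all_boot all_order all_algebra.
From Stdlib Require Import ClassicalEpsilon.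
Set Implicit Arguments. Unset Strict Implicit. Unset Printing Implicit Defensive.
Import GRing.Theory.
Local Open Scope ring_scope.

Definition nilpotent (R : pzRingType) (x : R) : Prop := exists n : nat, x ^+ n = 0.

Definition idempotent (R : pzRingType) (e : R) : Prop := e * e = e.

Definition nilb (R : pzRingType) : pred R :=
  fun x => if excluded_middle_informative (nilpotent x) then true else false.
Arguments nilb : clear implicits.

Lemma nilbP (R : pzRingType) (x : R) : reflect (nilpotent x) (nilb R x).
Proof.
rewrite /nilb; case: excluded_middle_informative => h; [exact: ReflectT|exact: ReflectF].
Qed.

Lemma nilb_idealr_closed (R : comNzRingType) : idealr_closed (nilb R).
Proof.
split.
- by apply/nilbP; exists 1%N; rewrite expr1.
- apply/nilbP => -[n]; rewrite expr1n; exact/eqP/oner_neq0.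
- move=> a u v /nilbP [m hu] /nilbP [k hv]; apply/nilbP; exists (m + k)%N.
  rewrite exprDn big1 // => i _.
  have [lt_ik|le_ki] := ltnP i k.
  + have hm : (m <= m + k - i)%N.
      by rewrite -addnBA ?leq_addr // ltnW.
    by rewrite exprMn -(subnKC hm) [u ^+ _]exprD hu mul0r mulr0 mul0r mul0rn.
  + by rewrite -(subnKC le_ki) exprD hv mul0r mulr0 mul0rn.
Qed.

HB.instance Definition _ (R : comNzRingType) :=
  isIdealr.Build R (nilb R) (nilb_idealr_closed R).

Definition NilIdeal (R : comNzRingType) : idealr R := Idealr.clone R (nilb R) _.

Notation "R /Nil" := ({ideal_quot (NilIdeal R)}) (at level 2).

Definition uniquely_weakly_nil_clean (R : pzRingType) : Prop :=
  forall x : R, exists! e : R,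
    idempotent e /\ (nilpotent (x - e) \/ nilpotent (x + e)).

Definition semi_Boolean (A : pzRingType) : Prop :=
  forall x : A, x ^+ 2 = x \/ x ^+ 2 = - x.

Definition idempotents_lift_uniquely_weakly (R : pzRingType) (I : pred R) : Prop :=
  forall x : R, x ^+ 2 - x \in I ->
    exists! e : R, idempotent e /\ (x - e \in I \/ x + e \in I).

(* Modulo N := Nil(R), the condition "x - e or x + e is nilpotent" for an
   idempotent e says that the class of x is the class of e or of -e, so its
   square is the class of x or of -x.  Conversely, when R/N is semi Boolean
   every x satisfies x^2 - x in N or (-x)^2 - (-x) in N, and being weakly
   close to e is invariant under x |-> -x, so unique weak lifting of
   idempotents gives a unique weakly nil clean decomposition of every x. *)
From HB Require Import structures.
From mathcomp Require Import all_boot all_order all_algebra.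
Set Implicit Arguments. Unset Strict Implicit. Unset Printing Implicit Defensive.
Import GRing.Theory.
Local Open Scope ring_scope.
Local Open Scope quotient_scope.

Lemma ex_unique_iff (T : Type) (P Q : T -> Prop) :
  (forall t, P t <-> Q t) -> (exists! t, P t) <-> (exists! t, Q t).
Proof.
move=> PQ; split=> -[t [Pt Ut]]; exists t.
- by split; [apply/PQ | move=> u /PQ; apply: Ut].
- by split; [apply/PQ | move=> u /PQ; apply: Ut].
Qed.

Definition weakly_close_idem (R : pzRingType) (I : {pred R}) (x e : R) : Prop :=
  idempotent e /\ (x - e \in I \/ x + e \in I).

Lemma weakly_close_idemN (R : pzRingType) (I : opprClosed R) (x e : R) :
  weakly_close_idem I (- x) e <-> weakly_close_idem I x e.
Proof.
rewrite /weakly_close_idem.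
have -> : (- x - e \in I) = (x + e \in I) by rewrite -opprD rpredN.
have -> : - x + e = - (x - e) by rewrite opprB addrC.
rewrite rpredN.
by split=> -[ide [h|h]]; split=> //; [right|left|right|left].
Qed.

Lemma uniquely_weakly_nil_cleanE (R : pzRingType) :
  uniquely_weakly_nil_clean R <->
  forall x : R, exists! e, weakly_close_idem (nilb R) x e.
Proof.
have closeE (x e : R) : idempotent e /\ (nilpotent (x - e) \/ nilpotent (x + e))
    <-> weakly_close_idem (nilb R) x e.
  by rewrite /weakly_close_idem; split=> -[ide [h|h]]; split=> //;
    [left|right|left|right]; apply/nilbP.
split=> H x; have [to from] := ex_unique_iff (closeE x); [exact: to | exact: from].
Qed.

Section NilQuotient.
Variable R : comNzRingType.

Lemma piNil_eq (x y : R) : \pi_(R /Nil) x = \pi y <-> x - y \in nilb R.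
Proof.
rewrite (@Quotient.idealrBE R (NilIdeal R) x y).
by split=> [/eqP|/eqP].
Qed.

Lemma piNil_semi_Boolean_of_close (x e : R) :
  weakly_close_idem (nilb R) x e ->
  (\pi_(R /Nil) x) ^+ 2 = \pi x \/ (\pi_(R /Nil) x) ^+ 2 = - \pi x.
Proof.
move=> [ide close].
have pi_e2 : (\pi_(R /Nil) e) ^+ 2 = \pi e by rewrite -rmorphXn expr2 ide.
case: close => [/piNil_eq -> | close]; first by left.
right; have -> : \pi_(R /Nil) x = - \pi e.
  by rewrite -rmorphN; apply/piNil_eq; rewrite opprK.
by rewrite sqrrN pi_e2 opprK.
Qed.

Lemma idem_mod_Nil_of_semi_Boolean (x : R) :
  (\pi_(R /Nil) x) ^+ 2 = \pi x \/ (\pi_(R /Nil) x) ^+ 2 = - \pi x ->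
  x ^+ 2 - x \in nilb R \/ (- x) ^+ 2 - (- x) \in nilb R.
Proof.
case=> h; [left | right]; apply/piNil_eq; first by rewrite rmorphXn.
by rewrite sqrrN rmorphXn rmorphN.
Qed.

End NilQuotient.

Theorem mainTheorem9 (R : comNzRingType) :
  uniquely_weakly_nil_clean R <->
  semi_Boolean (R /Nil) /\ idempotents_lift_uniquely_weakly (nilb R).
Proof.
rewrite uniquely_weakly_nil_cleanE; split.
- move=> uwnc; split=> [q | x _]; last exact: uwnc.
  elim/quotW: q => x; have [e [close _]] := uwnc x.
  exact: piNil_semi_Boolean_of_close close.
- move=> [sB lift] x.
  case: (idem_mod_Nil_of_semi_Boolean (sB (\pi x))) => [/lift // | /lift].
  exact: (iffLR (ex_unique_iff (weakly_close_idemN _ x))).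
Qed.
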